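(* Let $\nu>0$, $b>0$ and let $f:\mathbb{R}\to\mathbb{R}$ be continuously differentiable with: $f(0)=f(a)=f(1)=0$ for some $a\in(0,1)$; $f<0$ on $(0,a)$, $f>0$ on $(a,1)$; $f'(0)<0$, $f'(a)>0$, $f'(1)<0$; $\int_0^1 f(v)\,dv\ge 0$; and there exists $v_\ast\in(a,1)$ such that $f''(v)>0$ for $v\in[0,v_\ast)$ and $f''(v)<0$ for $v\in(v_\ast,1]$. Let $\hat v:\mathbb{R}\to\mathbb{R}$ be a monotone increasing $C^2$ function with $\hat v(-\infty)=0$, $\hat v(+\infty)=1$, satisfying $c\hat v_x=\nu\hat v_{xx}+bf(\hat v)$ for some constant $c\in\mathbb{R}$. Then: (i) $\frac{f(\hat v)}{\hat v_x}$ is strictly monotone increasing on $\mathbb{R}$; in particular $-\frac{d^2}{dx^2}\log\hat v_x=-\frac{d}{dx}\frac{\hat v_{xx}}{\hat v_x}=\frac{b}{\nu}\frac{d}{dx}\frac{f(\hat v)}{\hat v_x}>0$, i.e. $\hat v_x$ is strictly log-concave. (ii) $\gamma_-:=\inf_{x\in\mathbb{R}}\frac{b}{\nu}\frac{f(\hat v)}{\hat v_x}(x)=\frac{c}{2\nu}-\sqrt{\left(\frac{c}{2\nu}\right)^2-\frac{b}{\nu}f'(0)}$ and $\gamma_+:=\sup_{x\in\mathbb{R}}\frac{b}{\nu}\frac{f(\hat v)}{\hat v_x}(x)=\frac{c}{2\nu}+\sqrt{\left(\frac{c}{2\nu}\right)^2-\frac{b}{\nu}f'(1)}$. (iii) $\int_{-\infty}^0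 e^{-2\alpha\frac{c}{\nu}x}(\hat v_x^2+\hat v_{xx}^2)\,dx<\infty$ for all $\alpha\in\mathbb{R}$ with $\alpha\frac{c}{\nu}<\frac{c}{\nu}-\gamma_-$, and $\int_0^{\infty} e^{-2\alpha\frac{c}{\nu}x}(\hat v_x^2+\hat v_{xx}^2)\,dx<\infty$ for all $\alpha\in\mathbb{R}$ with $\alpha\frac{c}{\nu}>\frac{c}{\nu}-\gamma_+$. In particular $\int_{\mathbb{R}}e^{-\frac{c}{\nu}x}(\hat v_x^2+\hat v_{xx}^2)\,dx<\infty$.
   Context: $\hat v$ is a travelling wave (with wave speed $c$, which is $\ge 0$ under $\int_0^1 f\ge 0$) of $\partial_t v=\nu v_{xx}+bf(v)$; the assumption on $f''$ includes that $f$ is twice differentiable on $[0,1]$. *)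

From Stdlib Require Export Reals.
From Coquelicot Require Export Coquelicot.
Open Scope R_scope.

Definition gamma_minus (nu b c : R) (f : R -> R) : R :=
  c / (2 * nu) - sqrt ((c / (2 * nu)) ^ 2 - b / nu * Derive f 0).
Definition gamma_plus (nu b c : R) (f : R -> R) : R :=
  c / (2 * nu) + sqrt ((c / (2 * nu)) ^ 2 - b / nu * Derive f 1).

(* Writing g = f(v)/v' for the travelling wave v, the wave equation becomes the Riccati
   equation g' = f'(v) - (c/nu) g + (b/nu) g^2, and v''/v' = c/nu - (b/nu) g.

   (i) The weighted quantity H = g' v'^2 exp(-c x/nu) has derivative f''(v) v'^3 exp(-c x/nu).
   If g'(x1) <= 0, then on the side of x1 where f''(v) has a constant sign, H and hence g'
   are negative.  On that side g is monotone, so it converges at infinity to a root G of the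
   limiting quadratic f'(0) - (c/nu) G + (b/nu) G^2 (resp. with f'(1)); the sign of g near
   that end selects the negative (resp. positive) root, and strict monotonicity keeps g on
   the side of G where the quadratic, and therefore g' (as f' is monotone there), is
   positive: a contradiction.  So g is strictly increasing.

   (ii) An increasing solution converges at -oo and +oo to the two roots, which are
   (nu/b) gamma_- and (nu/b) gamma_+.

   (iii) Hence v''/v' tends to c/nu - gamma_- at -oo and to c/nu - gamma_+ at +oo.  Towards
   each end v' is therefore dominated by an exponential of any rate strictly beyond that
   limit, v'' by a multiple of v', and the weighted integrals converge by comparison with
   exponentials. *)

From Stdlib Require Import Reals Lra Psatz Classical.
From Coquelicot Require Import Coquelicot.
Open Scope R_scope.

Lemma Derive_of_is_derive (F dF : R -> R) x :
  is_derive F x (dF x) -> Derive (fun y => F y) x = dF x.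
Proof. apply is_derive_unique. Qed.

Lemma derive_ge0_le (F dF : R -> R) a b : a <= b ->
  (forall x, a <= x <= b -> is_derive F x (dF x)) ->
  (forall x, a < x < b -> 0 <= dF x) -> F a <= F b.
Proof.
  intros Hab HF HdF.
  destruct (Req_dec a b) as [<-|Hne]; [lra|].
  destruct (MVT_cor2 F dF a b) as [x [Hx Hax]]; [lra| |].
  - intros x Hx. apply is_derive_Reals, HF, Hx.
  - specialize (HdF x Hax). nra.
Qed.

Lemma derive_gt0_lt (F dF : R -> R) a b : a < b ->
  (forall x, a <= x <= b -> is_derive F x (dF x)) ->
  (forall x, a < x < b -> 0 < dF x) -> F a < F b.
Proof.
  intros Hab HF HdF.
  destruct (MVT_cor2 F dF a b Hab) as [x [Hx Hax]].
  - intros x Hx. apply is_derive_Reals, HF, Hx.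
  - specialize (HdF x Hax). nra.
Qed.

Lemma derive_le0_ge (F dF : R -> R) a b : a <= b ->
  (forall x, a <= x <= b -> is_derive F x (dF x)) ->
  (forall x, a < x < b -> dF x <= 0) -> F b <= F a.
Proof.
  intros Hab HF HdF.
  enough (- F a <= - F b) by lra.
  apply (derive_ge0_le (fun x => - F x) (fun x => - dF x)); auto.
  - intros x Hx. apply (is_derive_opp F), HF, Hx.
  - intros x Hx. specialize (HdF x Hx). lra.
Qed.

Lemma derive_lt0_gt (F dF : R -> R) a b : a < b ->
  (forall x, a <= x <= b -> is_derive F x (dF x)) ->
  (forall x, a < x < b -> dF x < 0) -> F b < F a.
Proof.
  intros Hab HF HdF.
  enough (- F a < - F b) by lra.
  apply (derive_gt0_lt (fun x => - F x) (fun x => - dF x)); auto.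
  - intros x Hx. apply (is_derive_opp F), HF, Hx.
  - intros x Hx. specialize (HdF x Hx). lra.
Qed.

Lemma derive_ge_exists_nonpos (h dh : R -> R) x0 m : 0 < m ->
  (forall x, x <= x0 -> is_derive h x (dh x)) -> (forall x, x <= x0 -> m <= dh x) ->
  exists x, x <= x0 /\ h x <= 0.
Proof.
  intros Hm Hh Hdh.
  set (x := x0 - Rabs (h x0) / m - 1).
  assert (Hdist : m * (x0 - x) = Rabs (h x0) + m) by (unfold x; field; lra).
  assert (x <= x0) by (unfold x; pose proof (Rdiv_le_0_compat _ _ (Rabs_pos (h x0)) Hm); lra).
  exists x. split; [assumption|].
  assert (h x - m * x <= h x0 - m * x0).
  { apply (derive_ge0_le (fun t => h t - m * t) (fun t => dh t - m)); [assumption | |].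
    - intros t Ht. apply (is_derive_minus h (fun t => m * t)); [apply Hh; lra |].
      auto_derive; [easy | ring].
    - intros t Ht. pose proof (Hdh t ltac:(lra)). lra. }
  pose proof (Rle_abs (h x0)). lra.
Qed.

Lemma derive_nondecr_ge0 (F dF : R -> R) :
  (forall x y, x <= y -> F x <= F y) -> (forall x, is_derive F x (dF x)) ->
  forall x, 0 <= dF x.
Proof.
  intros Hincr HF x.
  pose (pr := fun y => ex_derive_Reals_0 F y (ex_intro _ (dF y) (HF y))).
  rewrite <- (is_derive_unique F x (dF x) (HF x)), <- (Derive_Reals F x (pr x)).
  exact (nonneg_derivative_0 F pr Hincr x).
Qed.

Lemma derive_min_eq0 (F : R -> R) x0 l :
  (forall y, F x0 <= F y) -> is_derive F x0 l -> l = 0.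
Proof.
  intros Hmin HF.
  pose (pr := ex_derive_Reals_0 F x0 (ex_intro _ l HF)).
  rewrite <- (is_derive_unique F x0 l HF), <- (Derive_Reals F x0 pr).
  apply (deriv_minimum F (x0 - 1) (x0 + 1)); auto; lra.
Qed.

Lemma is_lim_p_infty_opp (F : R -> R) (l : Rbar) :
  is_lim F p_infty l -> is_lim (fun x => F (- x)) m_infty l.
Proof.
  intros HF. apply (is_lim_comp F (fun x => - x) m_infty l p_infty HF).
  - apply (is_lim_opp (fun x => x) m_infty m_infty), is_lim_id.
  - exists 0. easy.
Qed.

Lemma is_lim_m_infty_opp (F : R -> R) (l : Rbar) :
  is_lim F m_infty l -> is_lim (fun x => F (- x)) p_infty l.
Proof.
  intros HF. apply (is_lim_comp F (fun x => - x) p_infty l m_infty HF).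
  - apply (is_lim_opp (fun x => x) p_infty p_infty), is_lim_id.
  - exists 0. easy.
Qed.

Lemma is_derive_comp_opp (F : R -> R) x l :
  is_derive F (- x) l -> is_derive (fun y => F (- y)) x (- l).
Proof.
  intros HF.
  assert (Hopp : is_derive (fun y : R => - y) x (-1)) by (auto_derive; [easy | ring]).
  replace (- l) with (scal (-1) l) by (unfold scal; simpl; unfold mult; simpl; ring).
  exact (is_derive_comp F (fun y => - y) x l (-1) HF Hopp).
Qed.

Lemma is_derive_opp_comp_opp (F : R -> R) x l :
  is_derive F (- x) l -> is_derive (fun y => - F (- y)) x l.
Proof.
  intros HF. rewrite <- (Ropp_involutive l).
  exact (is_derive_opp (fun y => F (- y)) x (- l) (is_derive_comp_opp F x l HF)).
Qed.

Lemma Rbar_locally_p_infty_opp (P : R -> Prop) :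
  Rbar_locally p_infty P -> Rbar_locally m_infty (fun x => P (- x)).
Proof. intros [M HM]. exists (- M). intros x Hx. apply HM. lra. Qed.

Lemma nonincr_bounded_lim_m_infty (F : R -> R) x1 B :
  (forall x y, x <= y <= x1 -> F y <= F x) -> (forall x, x <= x1 -> F x <= B) ->
  exists L : R, is_lim F m_infty L.
Proof.
  intros Hdecr Hbound.
  destruct (completeness (fun r => exists x, x <= x1 /\ r = F x)) as [L [Hub Hlub]].
  - exists B. intros r [x [Hx ->]]. auto.
  - exists (F x1), x1. split; [lra | reflexivity].
  exists L. apply is_lim_spec. intros eps.
  destruct (classic (exists x0, x0 <= x1 /\ L - eps < F x0)) as [[x0 [Hx0 HF]] | Hnone].
  - exists x0. intros x Hx.
    assert (F x0 <= F x) by (apply Hdecr; lra).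
    assert (F x <= L) by (apply Hub; exists x; split; [lra | reflexivity]).
    apply Rabs_def1; lra.
  - enough (L <= L - eps) by (destruct eps; simpl in *; lra).
    apply Hlub. intros r [x [Hx ->]].
    apply Rnot_lt_le. intros Hlt. apply Hnone. exists x. split; [exact Hx | exact Hlt].
Qed.

Lemma derive_lim_m_infty_eq0 (F dF : R -> R) x1 (L D : R) :
  (forall x, x < x1 -> is_derive F x (dF x)) ->
  is_lim F m_infty L -> is_lim dF m_infty D -> D = 0.
Proof.
  intros HF HFL HdFD.
  destruct (Req_dec D 0) as [|HD]; auto. exfalso.
  assert (HaD : 0 < Rabs D) by (apply Rabs_pos_lt; auto).
  apply is_lim_spec in HFL. apply is_lim_spec in HdFD.
  destruct (HFL (mkposreal 1 Rlt_0_1)) as [M1 HM1].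
  destruct (HdFD (mkposreal _ (Rdiv_lt_0_compat _ 2 HaD Rlt_0_2))) as [M2 HM2].
  simpl in HM1, HM2.
  set (y := Rmin x1 (Rmin M1 M2) - 1).
  assert (y < x1 /\ y < M1 /\ y < M2) as (Hy1 & Hy2 & Hy3)
    by (unfold y; generalize (Rmin_l x1 (Rmin M1 M2)) (Rmin_r x1 (Rmin M1 M2))
          (Rmin_l M1 M2) (Rmin_r M1 M2); lra).
  set (x := y - 4 / Rabs D).
  assert (Hxy : x < y) by (unfold x; assert (0 < 4 / Rabs D) by (apply Rdiv_lt_0_compat; lra); lra).
  destruct (MVT_cor2 F dF x y Hxy) as [z [Hz Hxz]].
  { intros t Ht. apply is_derive_Reals, HF. lra. }
  (* |F y - F x| < 2 by convergence of F, but > 2 since |dF z| > |D| / 2 *)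
  pose proof (HM1 y Hy2). pose proof (HM1 x ltac:(lra)). pose proof (HM2 z ltac:(lra)).
  assert (Rabs (dF z) > Rabs D / 2).
  { pose proof (Rabs_triang_inv D (D - dF z)) as Htri.
    replace (D - (D - dF z)) with (dF z) in Htri by ring.
    rewrite (Rabs_minus_sym D) in Htri. lra. }
  assert (Rabs (F y - F x) = Rabs (dF z) * (4 / Rabs D)).
  { rewrite Hz, Rabs_mult, (Rabs_pos_eq (y - x)) by lra. unfold x. f_equal. ring. }
  assert (Rabs (dF z) * (4 / Rabs D) > Rabs D / 2 * (4 / Rabs D)).
  { apply Rmult_gt_compat_r; auto. apply Rdiv_lt_0_compat; lra. }
  replace (Rabs D / 2 * (4 / Rabs D)) with 2 in * by (field; lra).
  pose proof (Rabs_triang (F y - L) (- (F x - L))). rewrite Rabs_Ropp in *.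
  replace (F y - L + - (F x - L)) with (F y - F x) in * by ring.
  lra.
Qed.

Lemma is_glb_Rbar_range_lim_m_infty (h : R -> R) (L : R) :
  (forall x, L <= h x) -> is_lim h m_infty L ->
  is_glb_Rbar (fun y => exists x, y = h x) L.
Proof.
  intros Hle Hlim. split.
  - intros y [x ->]. apply Hle.
  - intros [l | |] Hl; simpl; auto.
    + apply Rnot_lt_le. intros HLl.
      destruct (proj2 (is_lim_spec h m_infty L) Hlim (mkposreal (l - L) ltac:(lra))) as [M HM].
      specialize (HM (M - 1) ltac:(lra)). simpl in HM. apply Rabs_def2 in HM.
      assert (Hl' : Rbar_le l (h (M - 1))) by (apply Hl; exists (M - 1); reflexivity).
      simpl in Hl'. lra.
    + exact (Hl (h 0) (ex_intro _ 0 eq_refl)).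
Qed.

Lemma is_lub_Rbar_range_lim_p_infty (h : R -> R) (L : R) :
  (forall x, h x <= L) -> is_lim h p_infty L ->
  is_lub_Rbar (fun y => exists x, y = h x) L.
Proof.
  intros Hle Hlim. split.
  - intros y [x ->]. apply Hle.
  - intros [l | |] Hl; simpl; auto.
    + apply Rnot_lt_le. intros HlL.
      destruct (proj2 (is_lim_spec h p_infty L) Hlim (mkposreal (L - l) ltac:(lra))) as [M HM].
      specialize (HM (M + 1) ltac:(lra)). simpl in HM. apply Rabs_def2 in HM.
      assert (Hl' : Rbar_le (h (M + 1)) l) by (apply Hl; exists (M + 1); reflexivity).
      simpl in Hl'. lra.
    + exact (Hl (h 0) (ex_intro _ 0 eq_refl)).
Qed.

(** * Scalar Riccati equations *)

Definition riccati (phi : R -> R) (k beta : R) (g : R -> R) (x : R) : R :=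
  phi x + k * g x + beta * g x ^ 2.

Lemma riccati_opp (phi g : R -> R) k beta x :
  riccati phi k beta g (- x) = riccati (fun y => phi (- y)) (- k) beta (fun y => - g (- y)) x.
Proof. unfold riccati. ring. Qed.

Lemma quadratic_neg_upper_bound phi k beta y B : 0 < beta -> Rabs phi <= B ->
  phi + k * y + beta * y ^ 2 < 0 -> y <= 1 + (Rabs k + B) / beta.
Proof.
  intros Hb HB Hneg.
  apply Rabs_le_between in HB.
  pose proof (Rle_abs k). pose proof (Rle_abs (- k)). rewrite Rabs_Ropp in *.
  set (K := (Rabs k + B) / beta).
  assert (HK : beta * K = Rabs k + B) by (unfold K; field; lra).
  assert (0 <= K) by (apply Rdiv_le_0_compat; lra).
  apply Rnot_lt_le. intros Hy.
  assert (0 < beta * y * (y - 1 - K)) by (apply Rmult_lt_0_compat; [apply Rmult_lt_0_compat|]; lra).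
  nra.
Qed.

Lemma quadratic_lower_bound_far_left phi k beta y B : 0 < beta -> Rabs phi <= B ->
  y <= - (1 + 2 * (Rabs k + B) / beta) -> beta / 2 * y ^ 2 <= phi + k * y + beta * y ^ 2.
Proof.
  intros Hb HB Hy.
  apply Rabs_le_between in HB.
  pose proof (Rle_abs k). pose proof (Rle_abs (- k)). rewrite Rabs_Ropp in *.
  set (K := 2 * (Rabs k + B) / beta) in Hy.
  assert (HK : beta * K = 2 * (Rabs k + B)) by (unfold K; field; lra).
  assert (0 <= K) by (apply Rdiv_le_0_compat; lra).
  assert (beta / 2 * (- y) >= Rabs k + B) by nra.
  assert (beta / 2 * y ^ 2 >= (Rabs k + B) * (- y)) by nra.
  nra.
Qed.

Lemma quadratic_pos_left_of_root beta k f0 G y : 0 < beta -> f0 < 0 ->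
  f0 + k * G + beta * G ^ 2 = 0 -> G <= 0 -> y < G -> 0 < f0 + k * y + beta * y ^ 2.
Proof.
  intros Hb Hf0 HG HG0 Hy.
  replace (f0 + k * y + beta * y ^ 2) with ((G - y) * (- (k + beta * (y + G))))
    by (replace f0 with (- (k * G) - beta * G ^ 2) by lra; ring).
  (* G is the negative root, so the slope k + 2 beta G there is negative *)
  assert (G * (k + 2 * beta * G) > 0) by nra.
  assert (k + 2 * beta * G < 0) by nra.
  apply Rmult_lt_0_compat; nra.
Qed.

Lemma quadratic_neg_root beta k f0 G : 0 < beta -> f0 < 0 ->
  f0 + k * G + beta * G ^ 2 = 0 -> G <= 0 ->
  beta * G = - k / 2 - sqrt ((k / 2) ^ 2 - beta * f0).
Proof.
  intros Hb Hf0 HG HG0.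
  set (s := sqrt ((k / 2) ^ 2 - beta * f0)).
  assert (Hs : s * s = (k / 2) ^ 2 - beta * f0) by (apply sqrt_sqrt; nra).
  assert (0 <= s) by apply sqrt_pos.
  assert (Hprod : (beta * G + k / 2 - s) * (beta * G + k / 2 + s) = 0) by nra.
  destruct (Rmult_integral _ _ Hprod) as [Hpos | Hneg]; [|lra].
  (* the other root s - k / 2 is positive since s > |k / 2| *)
  exfalso. assert (k / 2 < s) by nra. nra.
Qed.

Lemma quadratic_pos_root beta k f0 G : 0 < beta -> f0 < 0 ->
  f0 + k * G + beta * G ^ 2 = 0 -> 0 <= G ->
  beta * G = - k / 2 + sqrt ((k / 2) ^ 2 - beta * f0).
Proof.
  intros Hb Hf0 HG HG0.
  pose proof (quadratic_neg_root beta (- k) f0 (- G) Hb Hf0) as Hroot.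
  replace ((- k / 2) ^ 2) with ((k / 2) ^ 2) in Hroot by field.
  enough (beta * - G = - - k / 2 - sqrt ((k / 2) ^ 2 - beta * f0)) by lra.
  apply Hroot; [nra | lra].
Qed.

Section Riccati.

Variables (phi g : R -> R) (k beta : R).
Hypothesis beta_pos : 0 < beta.

Lemma riccati_nondecr_bounded_below x1 B :
  (forall x, x < x1 -> is_derive g x (riccati phi k beta g x)) ->
  (forall x, x < x1 -> Rabs (phi x) <= B) ->
  (forall x y, x <= y < x1 -> g x <= g y) ->
  forall x, x < x1 -> - (1 + 2 * (Rabs k + B) / beta) <= g x.
Proof.
  intros Hg HB Hincr x0 Hx0.
  set (K := 1 + 2 * (Rabs k + B) / beta).
  assert (HK : 1 <= K).
  { pose proof (Rle_trans _ _ _ (Rabs_pos _) (HB x0 Hx0)). pose proof (Rabs_pos k).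
    unfold K. enough (0 <= 2 * (Rabs k + B) / beta) by lra.
    apply Rdiv_le_0_compat; lra. }
  apply Rnot_lt_le. intros Hlow.
  assert (Hfar : forall x, x <= x0 -> g x < - K) by (intros x Hx; pose proof (Hincr x x0); lra).
  assert (Hgrowth : forall x, x <= x0 -> beta / 2 * g x ^ 2 <= riccati phi k beta g x).
  { intros x Hx. apply (quadratic_lower_bound_far_left _ _ _ _ B); auto.
    - apply HB. lra.
    - pose proof (Hfar x Hx). unfold K in *. lra. }
  (* since g' >= beta g^2 / 2 there, -1/g grows at rate at least beta / 2, so it cannot stay
     positive on the whole half-line to the left of x0 *)
  destruct (derive_ge_exists_nonpos (fun t => - / g t)
              (fun t => riccati phi k beta g t / g t ^ 2) x0 (beta / 2)) as [x [Hx Hnonpos]].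
  - lra.
  - intros t Ht. pose proof (Hfar t Ht).
    replace (riccati phi k beta g t / g t ^ 2) with (- (- riccati phi k beta g t / g t ^ 2))
      by (field; lra).
    apply (is_derive_opp (fun t => / g t)), is_derive_inv; [apply Hg | ]; lra.
  - intros t Ht. pose proof (Hfar t Ht). pose proof (Hgrowth t Ht).
    apply (Rmult_le_reg_r (g t ^ 2)); [nra|].
    replace (riccati phi k beta g t / g t ^ 2 * g t ^ 2) with (riccati phi k beta g t)
      by (field; lra).
    lra.
  - pose proof (Hfar x Hx). rewrite <- Rinv_opp in Hnonpos.
    pose proof (Rinv_0_lt_compat (- g x) ltac:(lra)). lra.
Qed.

Lemma is_lim_riccati (x : Rbar) (phi0 G : R) :
  is_lim phi x phi0 -> is_lim g x G ->
  is_lim (riccati phi k beta g) x (phi0 + k * G + beta * G ^ 2).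
Proof.
  intros Hphi HG.
  apply (is_lim_ext (fun y => phi y + k * g y + beta * (g y * g y))).
  { intros y. unfold riccati. ring. }
  replace (phi0 + k * G + beta * G ^ 2) with (phi0 + k * G + beta * (G * G)) by ring.
  apply is_lim_plus'; [apply is_lim_plus' |].
  - exact Hphi.
  - exact (is_lim_scal_l g k x G HG).
  - apply (is_lim_scal_l (fun y => g y * g y) beta x (G * G)).
    exact (is_lim_mult g g x G G HG HG I).
Qed.

Lemma riccati_lim_m_infty (phi0 x1 : R) :
  (forall x, x < x1 -> is_derive g x (riccati phi k beta g x)) ->
  is_lim phi m_infty phi0 ->
  (forall x, x < x1 -> riccati phi k beta g x < 0) \/
  (forall x, x < x1 -> 0 < riccati phi k beta g x) ->
  exists G : R, is_lim g m_infty G /\ phi0 + k * G + beta * G ^ 2 = 0.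
Proof.
  intros Hg Hphi Hsign.
  assert (HG : exists G : R, is_lim g m_infty G).
  { destruct (proj2 (is_lim_spec phi m_infty phi0) Hphi (mkposreal 1 Rlt_0_1)) as [M0 HM0].
    set (x2 := Rmin x1 M0 - 1).
    assert (x2 < x1 /\ x2 < M0) as [Hx21 Hx2M]
      by (unfold x2; generalize (Rmin_l x1 M0) (Rmin_r x1 M0); lra).
    set (B := Rabs phi0 + 1).
    assert (HB : forall x, x < x2 -> Rabs (phi x) <= B).
    { intros x Hx. specialize (HM0 x ltac:(lra)). simpl in HM0.
      pose proof (Rabs_triang_inv (phi x) phi0). unfold B. lra. }
    destruct Hsign as [Hneg | Hpos].
    - apply (nonincr_bounded_lim_m_infty g (x2 - 1) (1 + (Rabs k + B) / beta)).
      + intros x y Hxy. apply (derive_le0_ge g (riccati phi k beta g)); try lra.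
        * intros t Ht. apply Hg. lra.
        * intros t Ht. left. apply Hneg. lra.
      + intros x Hx. apply (quadratic_neg_upper_bound (phi x)); auto.
        * apply HB. lra.
        * apply Hneg. lra.
    - assert (Hincr : forall x y, x <= y < x2 -> g x <= g y).
      { intros x y Hxy. apply (derive_ge0_le g (riccati phi k beta g)); try lra.
        * intros t Ht. apply Hg. lra.
        * intros t Ht. left. apply Hpos. lra. }
      pose proof (riccati_nondecr_bounded_below x2 B) as Hlow.
      destruct (nonincr_bounded_lim_m_infty (fun x => - g x) (x2 - 1)
                  (1 + 2 * (Rabs k + B) / beta)) as [L HL].
      + intros x y Hxy. pose proof (Hincr x y ltac:(lra)). lra.
      + intros x Hx. enough (- (1 + 2 * (Rabs k + B) / beta) <= g x) by lra.
        apply Hlow; auto; [intros t Ht; apply Hg; lra | lra].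
      + exists (- L). apply (is_lim_ext (fun x => - - g x)); [intros; ring|].
        exact (is_lim_opp _ _ L HL). }
  destruct HG as [G HG]. exists G. split; [exact HG|].
  exact (derive_lim_m_infty_eq0 g (riccati phi k beta g) x1 G _ Hg HG
           (is_lim_riccati m_infty phi0 G Hphi HG)).
Qed.

End Riccati.

Lemma riccati_lim_p_infty (phi g : R -> R) (k beta phi0 x1 : R) : 0 < beta ->
  (forall x, x1 < x -> is_derive g x (riccati phi k beta g x)) ->
  is_lim phi p_infty phi0 ->
  (forall x, x1 < x -> riccati phi k beta g x < 0) \/
  (forall x, x1 < x -> 0 < riccati phi k beta g x) ->
  exists G : R, is_lim g p_infty G /\ phi0 + k * G + beta * G ^ 2 = 0.
Proof.
  intros Hbeta Hg Hphi Hsign.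
  destruct (riccati_lim_m_infty (fun y => phi (- y)) (fun y => - g (- y)) (- k) beta Hbeta
              phi0 (- x1)) as [G [HG Hroot]].
  - intros x Hx. rewrite <- riccati_opp. apply is_derive_opp_comp_opp, Hg. lra.
  - exact (is_lim_p_infty_opp phi phi0 Hphi).
  - destruct Hsign as [Hs | Hs]; [left | right]; intros x Hx;
      rewrite <- riccati_opp; apply Hs; lra.
  - exists (- G). split.
    + apply (is_lim_ext (fun x => - (- g (- - x)))); [intros x; rewrite !Ropp_involutive; reflexivity|].
      exact (is_lim_opp _ p_infty G (is_lim_m_infty_opp _ G HG)).
    + rewrite <- Hroot. ring.
Qed.

Lemma riccati_neg_m_infty_absurd (phi g : R -> R) (k beta phi0 x1 : R) :
  0 < beta -> phi0 < 0 ->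
  (forall x, x < x1 -> is_derive g x (riccati phi k beta g x)) ->
  (forall x, x < x1 -> riccati phi k beta g x < 0) ->
  is_lim phi m_infty phi0 -> (forall x, x < x1 -> phi0 <= phi x) ->
  Rbar_locally m_infty (fun x => g x <= 0) -> False.
Proof.
  intros Hbeta Hphi0 Hg Hneg Hphi Hphi_ge Hg_nonpos.
  destruct (riccati_lim_m_infty phi g k beta Hbeta phi0 x1 Hg Hphi (or_introl Hneg))
    as [G [HG Hroot]].
  assert (HG0 : G <= 0) by exact (is_lim_le_loc g (fun _ => 0) m_infty G 0 Hg_nonpos HG
                                   (is_lim_const 0 m_infty)).
  assert (Hdecr : forall x y, x < y < x1 -> g y < g x).
  { intros x y Hxy. apply (derive_lt0_gt g (riccati phi k beta g)); try lra.
    - intros t Ht. apply Hg. lra.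
    - intros t Ht. apply Hneg. lra. }
  set (y0 := x1 - 1).
  (* g decreases towards its limit G, so g y0 lies strictly left of the root G *)
  assert (Hy0 : g y0 < G).
  { enough (g (y0 - 1) <= G) by (pose proof (Hdecr (y0 - 1) y0 ltac:(unfold y0; lra)); lra).
    apply (is_lim_le_loc (fun _ => g (y0 - 1)) g m_infty (g (y0 - 1)) G); [|apply is_lim_const | exact HG].
    exists (y0 - 1). intros t Ht. left. apply Hdecr. unfold y0 in *. lra. }
  pose proof (quadratic_pos_left_of_root beta k phi0 G (g y0) Hbeta Hphi0 Hroot HG0 Hy0).
  pose proof (Hneg y0 ltac:(unfold y0; lra)). pose proof (Hphi_ge y0 ltac:(unfold y0; lra)).
  unfold riccati in *. lra.
Qed.

Lemma riccati_neg_p_infty_absurd (phi g : R -> R) (k beta phi0 x1 : R) :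
  0 < beta -> phi0 < 0 ->
  (forall x, x1 < x -> is_derive g x (riccati phi k beta g x)) ->
  (forall x, x1 < x -> riccati phi k beta g x < 0) ->
  is_lim phi p_infty phi0 -> (forall x, x1 < x -> phi0 <= phi x) ->
  Rbar_locally p_infty (fun x => 0 <= g x) -> False.
Proof.
  intros Hbeta Hphi0 Hg Hneg Hphi Hphi_ge Hg_nonneg.
  apply (riccati_neg_m_infty_absurd (fun y => phi (- y)) (fun y => - g (- y)) (- k) beta phi0
           (- x1) Hbeta Hphi0).
  - intros x Hx. rewrite <- riccati_opp. apply is_derive_opp_comp_opp, Hg. lra.
  - intros x Hx. rewrite <- riccati_opp. apply Hneg. lra.
  - exact (is_lim_p_infty_opp phi phi0 Hphi).
  - intros x Hx. apply Hphi_ge. lra.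
  - apply (Rbar_locally_p_infty_opp (fun x => - g x <= 0)).
    destruct Hg_nonneg as [M HM]. exists M. intros x Hx. specialize (HM x Hx). lra.
Qed.

(** * Improper integrals *)

Lemma ex_RInt_cont (h : R -> R) a b : (forall x, continuous h x) -> ex_RInt h a b.
Proof. intros Hh. apply (@ex_RInt_continuous R_CompleteNormedModule). auto. Qed.

Lemma RInt_exp_le C d a b : 0 < d -> 0 <= C -> a <= b ->
  RInt (fun x => C * exp (d * x)) a b <= C / d * exp (d * b).
Proof.
  intros Hd HC Hab.
  assert (H : is_RInt (fun x => C * exp (d * x)) a b
                (minus (C / d * exp (d * b)) (C / d * exp (d * a)))).
  { apply (is_RInt_derive (fun x => C / d * exp (d * x))).
    - intros x _. auto_derive; [easy | field; lra].
    - intros x _. apply (@ex_derive_continuous R_AbsRing R_NormedModule). auto_derive. easy. }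
  rewrite (is_RInt_unique _ _ _ _ H). change (minus ?u ?v) with (u - v).
  enough (0 <= C / d * exp (d * a)) by lra.
  apply Rmult_le_pos; [apply Rdiv_le_0_compat; lra | left; apply exp_pos].
Qed.

Lemma is_RInt_gen_m_infty_of_lim (h : R -> R) x0 (L : R) : (forall x, continuous h x) ->
  is_lim (fun a => RInt h a x0) m_infty L ->
  is_RInt_gen h (Rbar_locally m_infty) (at_point x0) L.
Proof.
  intros Hh HL P [eps HP].
  destruct (proj2 (is_lim_spec _ _ _) HL eps) as [M HM].
  apply (Filter_prod _ _ _ (fun a => a < M) (fun b => b = x0)).
  - exists M. auto.
  - reflexivity.
  - intros a b Ha ->. exists (RInt h a x0). split.
    + apply (@RInt_correct R_CompleteNormedModule), ex_RInt_cont, Hh.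
    + apply HP, HM, Ha.
Qed.

Lemma ex_RInt_gen_m_infty_exp_bound (h : R -> R) x0 C d b : 0 < d ->
  (forall x, continuous h x) -> (forall x, x <= x0 -> 0 <= h x <= C * exp (d * x)) ->
  ex_RInt_gen h (Rbar_locally m_infty) (at_point b).
Proof.
  intros Hd Hh Hbound.
  assert (HC : 0 <= C).
  { destruct (Hbound x0 (Rle_refl _)). pose proof (exp_pos (d * x0)). nra. }
  (* the partial integrals over [a, x0] increase as a decreases and are bounded *)
  destruct (nonincr_bounded_lim_m_infty (fun a => RInt h a x0) x0 (C / d * exp (d * x0)))
    as [L HL].
  - intros x y Hxy.
    rewrite <- (RInt_Chasles h x y x0) by (apply ex_RInt_cont; auto).
    change (plus ?u ?v) with (u + v).
    enough (0 <= RInt h x y) by lra.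
    apply RInt_ge_0; [lra | apply ex_RInt_cont; auto | ].
    intros t Ht. apply Hbound. lra.
  - intros x Hx. eapply Rle_trans; [|apply (RInt_exp_le C d x x0); auto].
    apply RInt_le; [exact Hx | apply ex_RInt_cont; auto | |].
    + apply ex_RInt_cont. intros t.
      apply (@ex_derive_continuous R_AbsRing R_NormedModule). auto_derive. easy.
    + intros t Ht. apply Hbound. lra.
  - apply (ex_RInt_gen_Chasles h x0).
    + exists L. apply is_RInt_gen_m_infty_of_lim; auto.
    + apply (proj2 (@ex_RInt_gen_at_point R_CompleteNormedModule h _ _)), ex_RInt_cont, Hh.
Qed.

Lemma ex_RInt_gen_p_infty_of_opp (h : R -> R) b :
  ex_RInt_gen (fun x => h (- x)) (Rbar_locally m_infty) (at_point (- b)) ->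
  ex_RInt_gen h (at_point b) (Rbar_locally p_infty).
Proof.
  intros [l Hl]. exists l. intros P HP.
  destruct (Hl P HP) as [Q S [M HM] HS HQS].
  apply (Filter_prod _ _ _ (fun a => a = b) (fun c => - M < c)).
  - reflexivity.
  - exists (- M). auto.
  - intros a c -> Hc.
    destruct (HQS (- c) (- b) (HM (- c) ltac:(lra)) HS) as [y [Hy HPy]].
    exists y. split; [|exact HPy]. simpl in Hy |- *.
    apply (is_RInt_comp_opp (fun x => h (- x)) c b) in Hy.
    apply is_RInt_swap, is_RInt_opp in Hy.
    apply (is_RInt_ext (fun x => opp (opp (h (- - x))))).
    + intros x _. rewrite !opp_opp, Ropp_involutive. reflexivity.
    + rewrite <- (opp_opp y). exact Hy.
Qed.

Lemma continuous_exp_weighted (p q : R -> R) A :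
  (forall x, is_derive p x (q x)) -> (forall x, continuous q x) ->
  forall x, continuous (fun x => exp (- 2 * A * x) * (p x ^ 2 + q x ^ 2)) x.
Proof.
  intros Hp Hq x.
  assert (Hcont_p : forall x, continuous p x)
    by (intros t; apply (@ex_derive_continuous R_AbsRing R_NormedModule); exists (q t); auto).
  apply (continuous_mult (fun x => exp (- 2 * A * x)) (fun x => p x ^ 2 + q x ^ 2)).
  - apply (@ex_derive_continuous R_AbsRing R_NormedModule). auto_derive. easy.
  - apply (@continuous_plus R_UniformSpace R_AbsRing R_NormedModule
             (fun x => p x ^ 2) (fun x => q x ^ 2));
      [apply (continuous_ext (fun t => p t * (p t * 1))) |
       apply (continuous_ext (fun t => q t * (q t * 1)))]; try reflexivity;
      repeat apply (continuous_mult (U := R_UniformSpace) (K := R_AbsRing)); auto;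
      apply continuous_const.
Qed.

Lemma sum_sq_le_of_ratio_bound P Q Z B : 0 <= P <= B -> Rabs Q <= Z * P ->
  P ^ 2 + Q ^ 2 <= (1 + Z ^ 2) * B ^ 2.
Proof.
  intros HP HQ. rewrite <- (pow2_abs Q).
  assert (Rabs Q ^ 2 <= (Z * P) ^ 2) by (apply pow_incr; pose proof (Rabs_pos Q); lra).
  assert (HP2 : P ^ 2 <= B ^ 2) by (apply pow_incr; lra).
  assert (Z ^ 2 * P ^ 2 <= Z ^ 2 * B ^ 2) by (apply Rmult_le_compat_l; [apply pow2_ge_0 | exact HP2]).
  replace ((Z * P) ^ 2) with (Z ^ 2 * P ^ 2) in * by ring.
  lra.
Qed.

Lemma ex_RInt_gen_weighted_m_infty (p q : R -> R) (lam A : R) :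
  (forall x, is_derive p x (q x)) -> (forall x, continuous q x) -> (forall x, 0 < p x) ->
  is_lim (fun x => q x / p x) m_infty lam -> A < lam ->
  ex_RInt_gen (fun x => exp (- 2 * A * x) * (p x ^ 2 + q x ^ 2))
    (Rbar_locally m_infty) (at_point 0).
Proof.
  intros Hp Hq Hpos Hlim HA.
  set (eps := (lam - A) / 2). set (r := A + eps). set (Z := Rabs lam + eps).
  assert (Heps : 0 < eps) by (unfold eps; lra).
  destruct (proj2 (is_lim_spec _ _ _) Hlim (mkposreal eps Heps)) as [M HM]. simpl in HM.
  assert (Hnear : forall x, x < M -> r * p x < q x /\ Rabs (q x) <= Z * p x).
  { intros x Hx. specialize (HM x Hx). pose proof (Hpos x).
    assert (Hqp : q x = q x / p x * p x) by (field; lra).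
    apply Rabs_def2 in HM. pose proof (Rle_abs lam). pose proof (Rle_abs (- lam)).
    rewrite Rabs_Ropp in *. split.
    - rewrite Hqp. apply Rmult_lt_compat_r; unfold r, eps in *; lra.
    - rewrite Hqp, Rabs_mult, (Rabs_pos_eq (p x)) by lra.
      apply Rmult_le_compat_r; [lra|]. apply Rabs_le. unfold Z. lra. }
  set (x0 := M - 1).
  (* towards -oo, p decays at least like exp (r x) *)
  set (F := fun t => p t * exp (- r * t)).
  assert (HF : forall x, x <= x0 -> F x <= F x0).
  { intros x Hx.
    apply (derive_ge0_le F (fun t => (q t - r * p t) * exp (- r * t))); auto.
    - intros t _. unfold F. auto_derive; [exists (q t); apply Hp |].
      rewrite (Derive_of_is_derive p q t (Hp t)). ring.
    - intros t Ht. apply Rmult_le_pos; [|left; apply exp_pos].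
      destruct (Hnear t ltac:(unfold x0 in *; lra)). lra. }
  apply (ex_RInt_gen_m_infty_exp_bound _ x0 ((1 + Z ^ 2) * F x0 ^ 2) (2 * eps));
    [lra | apply continuous_exp_weighted; auto |].
  intros x Hx.
  destruct (Hnear x ltac:(unfold x0 in *; lra)) as [_ Hq_le].
  pose proof (Hpos x).
  assert (Hp_le : p x <= F x0 * exp (r * x)).
  { replace (p x) with (F x * exp (r * x))
      by (unfold F; rewrite Rmult_assoc, <- exp_plus;
          replace (- r * x + r * x) with 0 by ring; rewrite exp_0; ring).
    apply Rmult_le_compat_r; [left; apply exp_pos | apply HF, Hx]. }
  assert (Hsq : p x ^ 2 + q x ^ 2 <= (1 + Z ^ 2) * F x0 ^ 2 * exp (r * x) ^ 2).
  { rewrite Rmult_assoc, <- Rpow_mult_distr. apply sum_sq_le_of_ratio_bound; lra. }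
  replace (exp (2 * eps * x)) with (exp (- 2 * A * x) * exp (r * x) ^ 2)
    by (simpl; rewrite Rmult_1_r, <- !exp_plus; f_equal; unfold r, eps; field).
  pose proof (exp_pos (- 2 * A * x)). split; [nra|].
  replace ((1 + Z ^ 2) * F x0 ^ 2 * (exp (- 2 * A * x) * exp (r * x) ^ 2))
    with (exp (- 2 * A * x) * ((1 + Z ^ 2) * F x0 ^ 2 * exp (r * x) ^ 2)) by ring.
  apply Rmult_le_compat_l; lra.
Qed.

Lemma ex_RInt_gen_weighted_p_infty (p q : R -> R) (mu A : R) :
  (forall x, is_derive p x (q x)) -> (forall x, continuous q x) -> (forall x, 0 < p x) ->
  is_lim (fun x => q x / p x) p_infty mu -> mu < A ->
  ex_RInt_gen (fun x => exp (- 2 * A * x) * (p x ^ 2 + q x ^ 2))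
    (at_point 0) (Rbar_locally p_infty).
Proof.
  intros Hp Hq Hpos Hlim HA.
  apply ex_RInt_gen_p_infty_of_opp. rewrite Ropp_0.
  apply (ex_RInt_gen_ext_eq
           (fun x => exp (- 2 * - A * x) * (p (- x) ^ 2 + (- q (- x)) ^ 2))).
  { intros x. f_equal; [f_equal; ring | ring]. }
  apply (ex_RInt_gen_weighted_m_infty (fun x => p (- x)) (fun x => - q (- x)) (- mu)); [| | | |lra].
  - intros x. apply is_derive_comp_opp, Hp.
  - intros x. apply (continuous_opp (fun x => q (- x))), (continuous_comp (fun x => - x) q).
    + apply (@ex_derive_continuous R_AbsRing R_NormedModule). auto_derive. easy.
    + apply Hq.
  - intros x. apply Hpos.
  - apply (is_lim_ext (fun x => - (q (- x) / p (- x)))).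
    { intros x. field. apply Rgt_not_eq, Hpos. }
    exact (is_lim_opp _ m_infty mu (is_lim_p_infty_opp _ mu Hlim)).
Qed.

(** * Uniqueness for the wave equation *)

Lemma gronwall_vanish (E dE : R -> R) K x0 :
  (forall x, is_derive E x (dE x)) -> (forall x, 0 <= E x) ->
  (forall x, Rabs (dE x) <= K * E x) -> E x0 = 0 -> forall x, E x = 0.
Proof.
  intros HE Hnonneg Hbound H0 x.
  apply Rle_antisym; [|apply Hnonneg].
  pose proof (Hbound x) as Hx. apply Rabs_le_between in Hx.
  destruct (Rle_or_lt x0 x) as [Hle | Hlt].
  - assert (E x * exp (- K * x) <= E x0 * exp (- K * x0)).
    { apply (derive_le0_ge (fun t => E t * exp (- K * t))
               (fun t => (dE t - K * E t) * exp (- K * t))); auto.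
      - intros t _. auto_derive; [exists (dE t); apply HE |].
        rewrite (Derive_of_is_derive E dE t (HE t)). ring.
      - intros t _. pose proof (Hbound t) as Ht. apply Rabs_le_between in Ht.
        pose proof (exp_pos (- K * t)). nra. }
    rewrite H0, Rmult_0_l in H. pose proof (exp_pos (- K * x)). nra.
  - assert (E x * exp (K * x) <= E x0 * exp (K * x0)).
    { apply (derive_ge0_le (fun t => E t * exp (K * t))
               (fun t => (dE t + K * E t) * exp (K * t))); [lra | |].
      - intros t _. auto_derive; [exists (dE t); apply HE |].
        rewrite (Derive_of_is_derive E dE t (HE t)). ring.
      - intros t _. pose proof (Hbound t) as Ht. apply Rabs_le_between in Ht.
        pose proof (exp_pos (K * t)). nra. }
    rewrite H0, Rmult_0_l in H. pose proof (exp_pos (K * x)). nra.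
Qed.

Lemma derive_cont_lipschitz (F dF : R -> R) a b : a <= b ->
  (forall y, is_derive F y (dF y)) -> (forall y, continuous dF y) ->
  exists L, 0 <= L /\
    forall x y, a <= x <= b -> a <= y <= b -> Rabs (F x - F y) <= L * Rabs (x - y).
Proof.
  intros Hab HF HdF.
  destruct (continuity_ab_maj (fun t => Rabs (dF t)) a b Hab) as [z [Hmax _]].
  { intros t _. apply (continuity_pt_comp dF Rabs), Rcontinuity_abs.
    apply continuity_pt_filterlim, HdF. }
  exists (Rabs (dF z)). split; [apply Rabs_pos|].
  assert (Hlt : forall x y, a <= x <= b -> a <= y <= b -> x < y ->
            Rabs (F x - F y) <= Rabs (dF z) * Rabs (x - y)).
  { intros x y Hx Hy Hxy.
    destruct (MVT_cor2 F dF x y Hxy) as [t [Ht Hxt]].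
    { intros t _. apply is_derive_Reals, HF. }
    rewrite <- Rabs_Ropp, Ropp_minus_distr, Ht, Rabs_mult, (Rabs_minus_sym x y).
    apply Rmult_le_compat_r; [apply Rabs_pos | apply Hmax; lra]. }
  intros x y Hx Hy. destruct (Rtotal_order x y) as [Hxy | [-> | Hxy]].
  - auto.
  - rewrite !Rminus_diag, Rabs_R0. lra.
  - rewrite (Rabs_minus_sym x y), (Rabs_minus_sym (F x) (F y)). auto.
Qed.

Lemma energy_derive_bound nu b c L W P Q D : 0 < nu -> 0 < b -> 0 <= L -> 0 <= P ->
  nu * Q = c * P - b * D -> Rabs D <= L * Rabs W ->
  Rabs (2 * W * P + 2 * P * Q) <= (1 + 2 * Rabs c / nu + b * L / nu) * (W ^ 2 + P ^ 2).
Proof.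
  intros Hnu Hb HL HP HQ HD.
  assert (HQ_le : nu * Rabs Q <= Rabs c * P + b * L * Rabs W).
  { rewrite <- (Rabs_pos_eq nu) by lra. rewrite <- Rabs_mult, HQ.
    eapply Rle_trans; [apply Rabs_triang|]. rewrite Rabs_Ropp, !Rabs_mult.
    rewrite (Rabs_pos_eq P), (Rabs_pos_eq b) by lra.
    assert (b * Rabs D <= b * (L * Rabs W)) by (apply Rmult_le_compat_l; lra). lra. }
  assert (HWP : 2 * Rabs W * P <= W ^ 2 + P ^ 2).
  { rewrite <- (pow2_abs W). pose proof (pow2_ge_0 (Rabs W - P)). nra. }
  assert (HPQ : 2 * P * Rabs Q <= 2 * Rabs c / nu * P ^ 2 + b * L / nu * (W ^ 2 + P ^ 2)).
  { apply (Rmult_le_reg_l nu); [exact Hnu|].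
    replace (nu * (2 * Rabs c / nu * P ^ 2 + b * L / nu * (W ^ 2 + P ^ 2)))
      with (2 * Rabs c * P ^ 2 + b * L * (W ^ 2 + P ^ 2)) by (field; lra).
    assert (2 * P * (nu * Rabs Q) <= 2 * P * (Rabs c * P + b * L * Rabs W))
      by (apply Rmult_le_compat_l; lra).
    assert (b * L * (2 * Rabs W * P) <= b * L * (W ^ 2 + P ^ 2))
      by (apply Rmult_le_compat_l; [apply Rmult_le_pos|]; lra).
    nra. }
  assert (0 <= 2 * Rabs c / nu * W ^ 2).
  { apply Rmult_le_pos; [apply Rdiv_le_0_compat; [pose proof (Rabs_pos c)|]; lra | apply pow2_ge_0]. }
  eapply Rle_trans; [apply Rabs_triang|].
  rewrite !Rabs_mult, (Rabs_pos_eq 2), (Rabs_pos_eq P) by lra.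
  nra.
Qed.

(** * Travelling waves *)

Section TravellingWave.

Variables (nu b c : R) (f df v dv ddv : R -> R).
Hypothesis nu_pos : 0 < nu.
Hypothesis b_pos : 0 < b.
Hypothesis f_deriv : forall u, is_derive f u (df u).
Hypothesis df_cont : forall u, continuous df u.
Hypothesis v_deriv : forall x, is_derive v x (dv x).
Hypothesis dv_deriv : forall x, is_derive dv x (ddv x).
Hypothesis v_nondecr : forall x y, x <= y -> v x <= v y.
Hypothesis v_lim_m_infty : is_lim v m_infty 0.
Hypothesis v_lim_p_infty : is_lim v p_infty 1.
Hypothesis wave_eq : forall x, c * dv x = nu * ddv x + b * f (v x).

Lemma wave_bounds x : 0 <= v x <= 1.
Proof.
  split.
  - apply (is_lim_le_loc v (fun _ => v x) m_infty 0 (v x)); [|exact v_lim_m_infty | apply is_lim_const].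
    exists x. intros y Hy. apply v_nondecr. lra.
  - apply (is_lim_le_loc (fun _ => v x) v p_infty (v x) 1); [|apply is_lim_const | exact v_lim_p_infty].
    exists x. intros y Hy. apply v_nondecr. lra.
Qed.

Lemma ddv_eq x : ddv x = (c * dv x - b * f (v x)) / nu.
Proof. rewrite wave_eq. field. lra. Qed.

(* If v' vanished at some x0, (v, v') would solve the same Lipschitz first-order system
   as the constant solution v(x0): the energy (v - v(x0))^2 + v'^2 satisfies a Gronwall
   bound, so v would be constant, against its distinct limits. *)
Lemma wave_deriv_pos x : 0 < dv x.
Proof.
  assert (Hdv_ge0 : forall x, 0 <= dv x) by exact (derive_nondecr_ge0 v dv v_nondecr v_deriv).
  destruct (Rle_lt_or_eq_dec 0 (dv x) (Hdv_ge0 x)) as [|Hzero]; [assumption | exfalso].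
  assert (Hddv : ddv x = 0).
  { apply (derive_min_eq0 dv x); [intros y; rewrite <- Hzero; apply Hdv_ge0 | apply dv_deriv]. }
  set (e := v x).
  assert (Hfe : f e = 0).
  { pose proof (wave_eq x) as Hx. rewrite <- Hzero, Hddv in Hx. unfold e. nra. }
  destruct (derive_cont_lipschitz f df 0 1 ltac:(lra) f_deriv df_cont) as [L [HL Hlip]].
  set (E := fun t => (v t - e) ^ 2 + dv t ^ 2).
  assert (HE0 : forall t, E t = 0).
  { apply (gronwall_vanish E (fun t => 2 * (v t - e) * dv t + 2 * dv t * ddv t)
             (1 + 2 * Rabs c / nu + b * L / nu) x).
    - intros t. unfold E. auto_derive; [split; [exists (dv t); apply v_deriv |
                                       split; [exists (ddv t); apply dv_deriv | easy]] |].
      rewrite (Derive_of_is_derive v dv t (v_deriv t)), (Derive_of_is_derive dv ddv t (dv_deriv t)).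
      ring.
    - intros t. unfold E. pose proof (pow2_ge_0 (v t - e)). pose proof (pow2_ge_0 (dv t)). lra.
    - intros t. apply (energy_derive_bound nu b c L (v t - e) (dv t) (ddv t) (f (v t) - f e));
        auto.
      + rewrite Hfe, Rminus_0_r, wave_eq. ring.
      + apply Hlip; [apply wave_bounds | apply wave_bounds].
    - unfold E, e. rewrite <- Hzero. ring. }
  assert (Hconst : forall t, v t = e).
  { intros t. specialize (HE0 t). unfold E in HE0.
    pose proof (pow2_ge_0 (v t - e)). pose proof (pow2_ge_0 (dv t)). nra. }
  assert (He0 : Finite e = Finite 0).
  { rewrite <- (is_lim_unique _ _ _ (is_lim_const e m_infty)).
    exact (is_lim_unique _ _ _ (is_lim_ext v _ m_infty 0 Hconst v_lim_m_infty)). }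
  assert (He1 : Finite e = Finite 1).
  { rewrite <- (is_lim_unique _ _ _ (is_lim_const e p_infty)).
    exact (is_lim_unique _ _ _ (is_lim_ext v _ p_infty 1 Hconst v_lim_p_infty)). }
  apply Rbar_finite_eq in He0, He1.
  lra.
Qed.

Lemma wave_incr x y : x < y -> v x < v y.
Proof. intros Hxy. apply (derive_gt0_lt v dv); auto. intros t _. apply wave_deriv_pos. Qed.

Lemma wave_range x : 0 < v x < 1.
Proof.
  pose proof (wave_incr (x - 1) x ltac:(lra)). pose proof (wave_incr x (x + 1) ltac:(lra)).
  pose proof (wave_bounds (x - 1)). pose proof (wave_bounds (x + 1)). lra.
Qed.

Definition wave_ratio x := f (v x) / dv x.

Definition wave_ratio_deriv x :=
  riccati (fun y => df (v y)) (- (c / nu)) (b / nu) wave_ratio x.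

Lemma ddv_div_dv x : ddv x / dv x = c / nu - b / nu * wave_ratio x.
Proof.
  pose proof (wave_deriv_pos x). unfold wave_ratio. rewrite ddv_eq. field. lra.
Qed.

Lemma wave_ratio_is_derive x : is_derive wave_ratio x (wave_ratio_deriv x).
Proof.
  pose proof (wave_deriv_pos x) as Hdv.
  replace (wave_ratio_deriv x)
    with ((dv x * df (v x) * dv x - f (v x) * ddv x) / dv x ^ 2).
  - apply (is_derive_div (fun t => f (v t)) dv); [| apply dv_deriv | lra].
    exact (is_derive_comp f v x (df (v x)) (dv x) (f_deriv (v x)) (v_deriv x)).
  - unfold wave_ratio_deriv, riccati, wave_ratio. rewrite ddv_eq. field. lra.
Qed.

Lemma ddv_div_dv_is_derive x :
  is_derive (fun y => ddv y / dv y) x (- (b / nu) * wave_ratio_deriv x).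
Proof.
  apply (is_derive_ext (fun y => c / nu - b / nu * wave_ratio y)).
  { intros y. simpl. rewrite ddv_div_dv. reflexivity. }
  auto_derive; [exists (wave_ratio_deriv x); apply wave_ratio_is_derive |].
  rewrite (Derive_of_is_derive wave_ratio wave_ratio_deriv x (wave_ratio_is_derive x)). ring.
Qed.

Variables (ddf : R -> R) (a vstar : R).
Hypothesis df_deriv : forall u, 0 <= u <= 1 -> is_derive df u (ddf u).
Hypothesis a_range : 0 < a < 1.
Hypothesis f_neg : forall u, 0 < u < a -> f u < 0.
Hypothesis f_pos : forall u, a < u < 1 -> 0 < f u.
Hypothesis df0_neg : df 0 < 0.
Hypothesis df1_neg : df 1 < 0.
Hypothesis ddf_pos : forall u, 0 <= u < vstar -> 0 < ddf u.
Hypothesis ddf_neg : forall u, vstar < u <= 1 -> ddf u < 0.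

Lemma wave_ratio_neg_m_infty : Rbar_locally m_infty (fun x => wave_ratio x < 0).
Proof.
  destruct (proj2 (is_lim_spec v m_infty 0) v_lim_m_infty (mkposreal a (proj1 a_range)))
    as [M HM].
  exists M. intros x Hx. specialize (HM x Hx). simpl in HM. apply Rabs_def2 in HM.
  pose proof (wave_range x). pose proof (wave_deriv_pos x).
  unfold wave_ratio, Rdiv. apply Rmult_neg_pos; [apply f_neg; lra | apply Rinv_0_lt_compat; lra].
Qed.

Lemma wave_ratio_pos_p_infty : Rbar_locally p_infty (fun x => 0 < wave_ratio x).
Proof.
  destruct (proj2 (is_lim_spec v p_infty 1) v_lim_p_infty (mkposreal (1 - a) ltac:(lra)))
    as [M HM].
  exists M. intros x Hx. specialize (HM x Hx). simpl in HM. apply Rabs_def2 in HM.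
  pose proof (wave_range x). pose proof (wave_deriv_pos x).
  apply Rdiv_lt_0_compat; [apply f_pos; lra | lra].
Qed.

Definition wave_ratio_weighted x := wave_ratio_deriv x * dv x ^ 2 * exp (- (c / nu) * x).

(* This is H = g' v'^2 exp(-c x/nu); the point of the weight is that all terms without f''
   cancel in its derivative. *)
Lemma wave_ratio_weighted_is_derive x :
  is_derive wave_ratio_weighted x (ddf (v x) * dv x ^ 3 * exp (- (c / nu) * x)).
Proof.
  apply (is_derive_ext (fun t => (df (v t) * dv t ^ 2 - c / nu * f (v t) * dv t
                                  + b / nu * f (v t) ^ 2) * exp (- (c / nu) * t))).
  { intros t. simpl. unfold wave_ratio_weighted, wave_ratio_deriv, riccati, wave_ratio.
    pose proof (wave_deriv_pos t). field. lra. }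
  pose proof (wave_range x).
  auto_derive.
  - repeat split; first [ exists (ddf (v x)); apply df_deriv; lra | exists (dv x); apply v_deriv
                        | exists (ddv x); apply dv_deriv | exists (df (v x)); apply f_deriv ].
  - rewrite (Derive_of_is_derive df ddf (v x)) by (apply df_deriv; lra).
    rewrite (Derive_of_is_derive v dv x (v_deriv x)), (Derive_of_is_derive dv ddv x (dv_deriv x)),
      (Derive_of_is_derive f df (v x) (f_deriv (v x))), ddv_eq.
    field. lra.
Qed.

Lemma wave_ratio_weighted_factor x :
  wave_ratio_weighted x = wave_ratio_deriv x * (dv x ^ 2 * exp (- (c / nu) * x)) /\
  0 < dv x ^ 2 * exp (- (c / nu) * x).
Proof.
  split; [unfold wave_ratio_weighted; ring|].
  apply Rmult_lt_0_compat; [apply pow_lt, wave_deriv_pos | apply exp_pos].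
Qed.

Lemma wave_ratio_deriv_pos_left x1 : v x1 <= vstar -> 0 < wave_ratio_deriv x1.
Proof.
  intros Hx1. apply Rnot_le_lt. intros Hle.
  (* H increases to the left of x1, where f'' (v) > 0, so g' < 0 there *)
  assert (Hneg : forall x, x < x1 -> wave_ratio_deriv x < 0).
  { intros x Hx.
    assert (Hlt : wave_ratio_weighted x < wave_ratio_weighted x1).
    { apply (derive_gt0_lt _ (fun t => ddf (v t) * dv t ^ 3 * exp (- (c / nu) * t))); auto.
      - intros t _. apply wave_ratio_weighted_is_derive.
      - intros t Ht. pose proof (wave_incr t x1 (proj2 Ht)). pose proof (wave_range t).
        apply Rmult_lt_0_compat; [apply Rmult_lt_0_compat|].
        + apply ddf_pos. lra.
        + apply pow_lt, wave_deriv_pos.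
        + apply exp_pos. }
    destruct (wave_ratio_weighted_factor x) as [Heq Hw].
    destruct (wave_ratio_weighted_factor x1) as [Heq1 Hw1]. rewrite Heq, Heq1 in Hlt. nra. }
  apply (riccati_neg_m_infty_absurd (fun y => df (v y)) wave_ratio (- (c / nu)) (b / nu) (df 0) x1).
  - apply Rdiv_lt_0_compat; lra.
  - exact df0_neg.
  - intros x _. apply wave_ratio_is_derive.
  - exact Hneg.
  - exact (is_lim_comp_continuous v df m_infty 0 v_lim_m_infty (df_cont 0)).
  - intros x Hx. pose proof (wave_range x). pose proof (wave_incr x x1 Hx).
    apply (derive_ge0_le df ddf 0 (v x)); [lra | |].
    + intros u Hu. apply df_deriv. lra.
    + intros u Hu. left. apply ddf_pos. lra.
  - destruct wave_ratio_neg_m_infty as [M HM]. exists M. intros x Hx. left. auto.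
Qed.

Lemma wave_ratio_deriv_pos_right x1 : vstar < v x1 -> 0 < wave_ratio_deriv x1.
Proof.
  intros Hx1. apply Rnot_le_lt. intros Hle.
  assert (Hneg : forall x, x1 < x -> wave_ratio_deriv x < 0).
  { intros x Hx.
    assert (Hlt : wave_ratio_weighted x < wave_ratio_weighted x1).
    { apply (derive_lt0_gt _ (fun t => ddf (v t) * dv t ^ 3 * exp (- (c / nu) * t))); auto.
      - intros t _. apply wave_ratio_weighted_is_derive.
      - intros t Ht. pose proof (wave_incr x1 t (proj1 Ht)). pose proof (wave_range t).
        enough (0 < - ddf (v t) * dv t ^ 3 * exp (- (c / nu) * t)) by lra.
        apply Rmult_lt_0_compat; [apply Rmult_lt_0_compat|].
        + enough (ddf (v t) < 0) by lra. apply ddf_neg. lra.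
        + apply pow_lt, wave_deriv_pos.
        + apply exp_pos. }
    destruct (wave_ratio_weighted_factor x) as [Heq Hw].
    destruct (wave_ratio_weighted_factor x1) as [Heq1 Hw1]. rewrite Heq, Heq1 in Hlt. nra. }
  apply (riccati_neg_p_infty_absurd (fun y => df (v y)) wave_ratio (- (c / nu)) (b / nu) (df 1) x1).
  - apply Rdiv_lt_0_compat; lra.
  - exact df1_neg.
  - intros x _. apply wave_ratio_is_derive.
  - exact Hneg.
  - exact (is_lim_comp_continuous v df p_infty 1 v_lim_p_infty (df_cont 1)).
  - intros x Hx. pose proof (wave_range x). pose proof (wave_incr x1 x Hx).
    apply (derive_le0_ge df ddf (v x) 1); [lra | |].
    + intros u Hu. apply df_deriv. lra.
    + intros u Hu. left. apply ddf_neg. lra.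
  - destruct wave_ratio_pos_p_infty as [M HM]. exists M. intros x Hx. left. auto.
Qed.

Lemma wave_ratio_deriv_pos x : 0 < wave_ratio_deriv x.
Proof.
  destruct (Rle_or_lt (v x) vstar).
  - apply wave_ratio_deriv_pos_left. assumption.
  - apply wave_ratio_deriv_pos_right. assumption.
Qed.

Lemma wave_ratio_incr x y : x < y -> wave_ratio x < wave_ratio y.
Proof.
  intros Hxy. apply (derive_gt0_lt wave_ratio wave_ratio_deriv); auto.
  - intros t _. apply wave_ratio_is_derive.
  - intros t _. apply wave_ratio_deriv_pos.
Qed.

Lemma Derive_f_eq x : Derive f x = df x.
Proof. apply is_derive_unique, f_deriv. Qed.

Lemma gamma_minus_lt_half : gamma_minus nu b c f < c / (2 * nu).
Proof.
  unfold gamma_minus. rewrite Derive_f_eq.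
  enough (0 < sqrt ((c / (2 * nu)) ^ 2 - b / nu * df 0)) by lra.
  apply sqrt_lt_R0. pose proof (pow2_ge_0 (c / (2 * nu))).
  assert (0 < b / nu) by (apply Rdiv_lt_0_compat; lra). nra.
Qed.

Lemma gamma_plus_gt_half : c / (2 * nu) < gamma_plus nu b c f.
Proof.
  unfold gamma_plus. rewrite Derive_f_eq.
  enough (0 < sqrt ((c / (2 * nu)) ^ 2 - b / nu * df 1)) by lra.
  apply sqrt_lt_R0. pose proof (pow2_ge_0 (c / (2 * nu))).
  assert (0 < b / nu) by (apply Rdiv_lt_0_compat; lra). nra.
Qed.

Lemma wave_ratio_lim_m_infty :
  exists G : R, is_lim wave_ratio m_infty G /\ (forall x, G <= wave_ratio x) /\
    b / nu * G = gamma_minus nu b c f.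
Proof.
  assert (Hbeta : 0 < b / nu) by (apply Rdiv_lt_0_compat; lra).
  destruct (riccati_lim_m_infty (fun y => df (v y)) wave_ratio (- (c / nu)) (b / nu) Hbeta
              (df 0) 0) as [G [HG Hroot]].
  - intros x _. apply wave_ratio_is_derive.
  - exact (is_lim_comp_continuous v df m_infty 0 v_lim_m_infty (df_cont 0)).
  - right. intros x _. apply wave_ratio_deriv_pos.
  - exists G. split; [exact HG | split].
    + intros x. apply (is_lim_le_loc wave_ratio (fun _ => wave_ratio x) m_infty G (wave_ratio x));
        [| exact HG | apply is_lim_const].
      exists x. intros y Hy. left. apply wave_ratio_incr, Hy.
    + assert (HG0 : G <= 0).
      { apply (is_lim_le_loc wave_ratio (fun _ => 0) m_infty G 0); [| exact HG | apply is_lim_const].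
        destruct wave_ratio_neg_m_infty as [M HM]. exists M. intros x Hx. left. auto. }
      unfold gamma_minus. rewrite Derive_f_eq, (quadratic_neg_root _ _ _ G Hbeta df0_neg Hroot HG0).
      replace (- - (c / nu) / 2) with (c / (2 * nu)) by (field; lra).
      replace ((- (c / nu) / 2) ^ 2) with ((c / (2 * nu)) ^ 2) by (field; lra).
      reflexivity.
Qed.

Lemma wave_ratio_lim_p_infty :
  exists G : R, is_lim wave_ratio p_infty G /\ (forall x, wave_ratio x <= G) /\
    b / nu * G = gamma_plus nu b c f.
Proof.
  assert (Hbeta : 0 < b / nu) by (apply Rdiv_lt_0_compat; lra).
  destruct (riccati_lim_p_infty (fun y => df (v y)) wave_ratio (- (c / nu)) (b / nu)
              (df 1) 0 Hbeta) as [G [HG Hroot]].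
  - intros x _. apply wave_ratio_is_derive.
  - exact (is_lim_comp_continuous v df p_infty 1 v_lim_p_infty (df_cont 1)).
  - right. intros x _. apply wave_ratio_deriv_pos.
  - exists G. split; [exact HG | split].
    + intros x. apply (is_lim_le_loc (fun _ => wave_ratio x) wave_ratio p_infty (wave_ratio x) G);
        [| apply is_lim_const | exact HG].
      exists x. intros y Hy. left. apply wave_ratio_incr, Hy.
    + assert (HG0 : 0 <= G).
      { apply (is_lim_le_loc (fun _ => 0) wave_ratio p_infty 0 G); [| apply is_lim_const | exact HG].
        destruct wave_ratio_pos_p_infty as [M HM]. exists M. intros x Hx. left. auto. }
      unfold gamma_plus. rewrite Derive_f_eq, (quadratic_pos_root _ _ _ G Hbeta df1_neg Hroot HG0).
      replace (- - (c / nu) / 2) with (c / (2 * nu)) by (field; lra).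
      replace ((- (c / nu) / 2) ^ 2) with ((c / (2 * nu)) ^ 2) by (field; lra).
      reflexivity.
Qed.

Lemma wave_ratio_glb :
  is_glb_Rbar (fun g => exists x, g = b / nu * wave_ratio x) (gamma_minus nu b c f).
Proof.
  destruct wave_ratio_lim_m_infty as [G [HG [Hle <-]]].
  apply (is_glb_Rbar_range_lim_m_infty (fun x => b / nu * wave_ratio x)).
  - intros x. apply Rmult_le_compat_l; [apply Rlt_le, Rdiv_lt_0_compat; lra | apply Hle].
  - exact (is_lim_scal_l wave_ratio (b / nu) m_infty G HG).
Qed.

Lemma wave_ratio_lub :
  is_lub_Rbar (fun g => exists x, g = b / nu * wave_ratio x) (gamma_plus nu b c f).
Proof.
  destruct wave_ratio_lim_p_infty as [G [HG [Hle <-]]].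
  apply (is_lub_Rbar_range_lim_p_infty (fun x => b / nu * wave_ratio x)).
  - intros x. apply Rmult_le_compat_l; [apply Rlt_le, Rdiv_lt_0_compat; lra | apply Hle].
  - exact (is_lim_scal_l wave_ratio (b / nu) p_infty G HG).
Qed.

Hypothesis ddv_cont : forall x, continuous ddv x.

Lemma is_lim_ddv_div_dv (x : Rbar) (G : R) : is_lim wave_ratio x G ->
  is_lim (fun y => ddv y / dv y) x (c / nu - b / nu * G).
Proof.
  intros HG.
  apply (is_lim_ext (fun y => c / nu - b / nu * wave_ratio y)); [intros y; rewrite ddv_div_dv; reflexivity|].
  apply (is_lim_comp_continuous wave_ratio (fun g => c / nu - b / nu * g) x G HG).
  apply (@ex_derive_continuous R_AbsRing R_NormedModule). auto_derive. easy.
Qed.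

Lemma wave_weighted_L2_m_infty alpha : alpha * (c / nu) < c / nu - gamma_minus nu b c f ->
  ex_RInt_gen (fun x => exp (- 2 * alpha * (c / nu) * x) * (dv x ^ 2 + ddv x ^ 2))
    (Rbar_locally m_infty) (at_point 0).
Proof.
  intros Halpha. destruct wave_ratio_lim_m_infty as [G [HG [_ Hgamma]]].
  apply (ex_RInt_gen_ext_eq (fun x => exp (- 2 * (alpha * (c / nu)) * x) * (dv x ^ 2 + ddv x ^ 2))).
  { intros x. f_equal. f_equal. ring. }
  apply (ex_RInt_gen_weighted_m_infty dv ddv (c / nu - b / nu * G)); auto.
  - exact wave_deriv_pos.
  - exact (is_lim_ddv_div_dv m_infty G HG).
  - lra.
Qed.

Lemma wave_weighted_L2_p_infty alpha : alpha * (c / nu) > c / nu - gamma_plus nu b c f ->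
  ex_RInt_gen (fun x => exp (- 2 * alpha * (c / nu) * x) * (dv x ^ 2 + ddv x ^ 2))
    (at_point 0) (Rbar_locally p_infty).
Proof.
  intros Halpha. destruct wave_ratio_lim_p_infty as [G [HG [_ Hgamma]]].
  apply (ex_RInt_gen_ext_eq (fun x => exp (- 2 * (alpha * (c / nu)) * x) * (dv x ^ 2 + ddv x ^ 2))).
  { intros x. f_equal. f_equal. ring. }
  apply (ex_RInt_gen_weighted_p_infty dv ddv (c / nu - b / nu * G)); auto.
  - exact wave_deriv_pos.
  - exact (is_lim_ddv_div_dv p_infty G HG).
  - lra.
Qed.

Lemma wave_weighted_L2 :
  ex_RInt_gen (fun x => exp (- (c / nu) * x) * (dv x ^ 2 + ddv x ^ 2))
    (Rbar_locally m_infty) (Rbar_locally p_infty).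
Proof.
  pose proof gamma_minus_lt_half. pose proof gamma_plus_gt_half.
  assert (Hhalf : c / (2 * nu) = 1 / 2 * (c / nu)) by (field; lra).
  apply (ex_RInt_gen_Chasles _ 0);
    apply (ex_RInt_gen_ext_eq (fun x => exp (- 2 * (1 / 2) * (c / nu) * x) * (dv x ^ 2 + ddv x ^ 2)));
    try (intros x; f_equal; f_equal; field; lra).
  - apply wave_weighted_L2_m_infty. lra.
  - apply wave_weighted_L2_p_infty. lra.
Qed.

End TravellingWave.

Theorem proposition1p2
  (nu b : R) (f : R -> R) (a vstar : R) (vhat : R -> R) (c : R) :
  0 < nu -> 0 < b ->
  (forall v, ex_derive f v /\ continuous (Derive f) v) ->
  0 < a < 1 ->
  f 0 = 0 -> f a = 0 -> f 1 = 0 ->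
  (forall v, 0 < v < a -> f v < 0) ->
  (forall v, a < v < 1 -> 0 < f v) ->
  Derive f 0 < 0 -> 0 < Derive f a -> Derive f 1 < 0 ->
  0 <= RInt f 0 1 ->
  (forall v, 0 <= v <= 1 -> ex_derive (Derive f) v) ->
  a < vstar < 1 ->
  (forall v, 0 <= v < vstar -> 0 < Derive (Derive f) v) ->
  (forall v, vstar < v <= 1 -> Derive (Derive f) v < 0) ->
  (forall x y, x <= y -> vhat x <= vhat y) ->
  (forall x, ex_derive vhat x /\ ex_derive (Derive vhat) x
             /\ continuous (Derive (Derive vhat)) x) ->
  is_lim vhat m_infty 0 -> is_lim vhat p_infty 1 ->
  (forall x, c * Derive vhat x = nu * Derive (Derive vhat) x + b * f (vhat x)) ->
  (* (i) *)
  ((forall x, 0 < Derive vhat x) /\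
   (forall x y, x < y ->
      f (vhat x) / Derive vhat x < f (vhat y) / Derive vhat y) /\
   (forall x,
      ex_derive (fun y => f (vhat y) / Derive vhat y) x /\
      is_derive (fun y => Derive (Derive vhat) y / Derive vhat y) x
        (- (b / nu) * Derive (fun y => f (vhat y) / Derive vhat y) x) /\
      0 < Derive (fun y => f (vhat y) / Derive vhat y) x)) /\
  (* (ii) *)
  is_glb_Rbar (fun g => exists x, g = b / nu * (f (vhat x) / Derive vhat x))
              (Finite (gamma_minus nu b c f)) /\
  is_lub_Rbar (fun g => exists x, g = b / nu * (f (vhat x) / Derive vhat x))
              (Finite (gamma_plus nu b c f)) /\
  (* (iii) *)
  (forall alpha, alpha * (c / nu) < c / nu - gamma_minus nu b c f ->
     ex_RInt_gen (fun x => exp (- 2 * alpha * (c / nu) * x)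
                   * (Derive vhat x ^ 2 + Derive (Derive vhat) x ^ 2))
       (Rbar_locally m_infty) (at_point 0)) /\
  (forall alpha, alpha * (c / nu) > c / nu - gamma_plus nu b c f ->
     ex_RInt_gen (fun x => exp (- 2 * alpha * (c / nu) * x)
                   * (Derive vhat x ^ 2 + Derive (Derive vhat) x ^ 2))
       (at_point 0) (Rbar_locally p_infty)) /\
  ex_RInt_gen (fun x => exp (- (c / nu) * x)
                 * (Derive vhat x ^ 2 + Derive (Derive vhat) x ^ 2))
    (Rbar_locally m_infty) (Rbar_locally p_infty).
Proof.
  (* The zeros of f, f'(a) > 0, the sign of the integral of f and a < v* < 1 only matter for
     the existence of the wave. *)
  intros Hnu Hb Hf Ha _ _ _ Hneg Hpos Hdf0 _ Hdf1 _ Hddf _ Hddf_pos Hddf_neg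
    Hmono Hv Hlim_m Hlim_p Hwave.
  assert (Hf_d : forall u, is_derive f u (Derive f u)) by (intros u; apply Derive_correct, Hf).
  assert (Hdf_c : forall u, continuous (Derive f) u) by (intros u; apply Hf).
  assert (Hdf_d : forall u, 0 <= u <= 1 -> is_derive (Derive f) u (Derive (Derive f) u))
    by (intros u Hu; apply Derive_correct, Hddf, Hu).
  assert (Hv_d : forall x, is_derive vhat x (Derive vhat x))
    by (intros x; apply Derive_correct, Hv).
  assert (Hdv_d : forall x, is_derive (Derive vhat) x (Derive (Derive vhat) x))
    by (intros x; apply Derive_correct, Hv).
  assert (Hddv_c : forall x, continuous (Derive (Derive vhat)) x) by (intros x; apply Hv).
  refine (conj (conj _ (conj _ _)) (conj _ (conj _ (conj _ (conj _ _))))).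
  - eapply (wave_deriv_pos nu b c f (Derive f) vhat); eassumption.
  - eapply (wave_ratio_incr nu b c f (Derive f) vhat); eassumption.
  - intros x.
    assert (Hd : is_derive (fun y => f (vhat y) / Derive vhat y) x
                   (wave_ratio_deriv nu b c f (Derive f) vhat (Derive vhat) x))
      by (eapply (wave_ratio_is_derive nu b c f (Derive f) vhat); eassumption).
    replace (Derive (fun y => f (vhat y) / Derive vhat y) x)
      with (wave_ratio_deriv nu b c f (Derive f) vhat (Derive vhat) x)
      by (symmetry; apply is_derive_unique, Hd).
    split; [eexists; exact Hd | split].
    + eapply (ddv_div_dv_is_derive nu b c f (Derive f) vhat); eassumption.
    + eapply (wave_ratio_deriv_pos nu b c f (Derive f) vhat); eassumption.
  - eapply (wave_ratio_glb nu b c f (Derive f) vhat); eassumption.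
  - eapply (wave_ratio_lub nu b c f (Derive f) vhat); eassumption.
  - intros alpha. eapply (wave_weighted_L2_m_infty nu b c f (Derive f) vhat); eassumption.
  - intros alpha. eapply (wave_weighted_L2_p_infty nu b c f (Derive f) vhat); eassumption.
  - eapply (wave_weighted_L2 nu b c f (Derive f) vhat); eassumption.
Qed.
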